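(* Let $\alpha$ be a nonzero real number and let $\gamma$ be a closed $\alpha$-stationary curve in $\mathbb S^2$ not passing through $N$. (1) If $\gamma$ is contained in the open upper hemisphere $\mathbb S^2_+=\mathbb S^2\cap\{z>0\}$, then $\alpha<0$. (2) If $\gamma$ is contained in the open lower hemisphere $\mathbb S^2_-=\mathbb S^2\cap\{z<0\}$, then $\alpha>0$.
   Context: $\mathbb S^2\subset\mathbb R^3$ is the unit sphere with the Euclidean inner product $\langle,\rangle$. It is parametrized by $\Psi(u,v)=(\sin u\cos v,\sin u\sin v,\cos u)$, and $N=(0,0,1)$. The spherical distance from $\Psi(u,v)$ to $N$ is $u\in[0,\pi]$. For a curve $\gamma(t)=\Psi(u(t),v(t))$, the energy is $$E_\alpha[\gamma]=\int_\gamma\mathsf d^\alpha ds=\int u^\alpha\sqrt{u'^2+\sin^2(u)v'^2}\,dt,$$ where $\mathsf d$ is the distance to $N$. The curve is $\alpha$-stationary if it is a critical point of $E_\alpha$ (Euler–Lagrange equations). Equivalently, its curvature satisfies $\kappa=\alpha\langle\mathbf n,\xi\rangle/\mathsf d$. Here $\mathbf n=(\gamma'\times\gamma)/|\gamma'|$, $\kappa=\langle\gamma'',\mathbf n\rangle/|\gamma'|^2$, and $\xi=\Psi_u$ is the unit tangent of the minimizing geodesic from $N$. Throughout the paper, $\alpha\ne0$ and curves avoid $N$. *)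

From Stdlib Require Import Reals.
From Coquelicot Require Import Coquelicot.
Open Scope R_scope.

Definition vec3 := (R * R * R)%type.
Definition vx (p : vec3) : R := fst (fst p).
Definition vy (p : vec3) : R := snd (fst p).
Definition vz (p : vec3) : R := snd p.
Definition dot (p q : vec3) : R := vx p * vx q + vy p * vy q + vz p * vz q.
Definition vnorm (p : vec3) : R := sqrt (dot p p).
Definition cross (p q : vec3) : vec3 :=
  (vy p * vz q - vz p * vy q, vz p * vx q - vx p * vz q, vx p * vy q - vy p * vx q).
Definition vscale (a : R) (p : vec3) : vec3 := (a * vx p, a * vy p, a * vz p).
Definition vsub (p q : vec3) : vec3 := (vx p - vx q, vy p - vy q, vz p - vz q).

Definition Npole : vec3 := (0, 0, 1).
Definition Spole : vec3 := (0, 0, -1).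

(* Spherical distance to N: for p = Psi(u,v), d(p) = u = acos (z). *)
Definition dN (p : vec3) : R := acos (vz p).

(* xi = Psi_u at p = Psi(u,v):  Psi_u = (cos u * p - N) / sin u,
   with cos u = z, sin u = sin (dN p) = sqrt(1 - z^2).  Defined off the poles. *)
Definition xi (p : vec3) : R * R * R :=
  vscale (/ sin (dN p)) (vsub (vscale (vz p) p) Npole).

Record curve := mkCurve { cx : R -> R; cy : R -> R; cz : R -> R }.
Definition pt (g : curve) (t : R) : vec3 := (cx g t, cy g t, cz g t).
Definition vel (g : curve) (t : R) : vec3 :=
  (Derive (cx g) t, Derive (cy g) t, Derive (cz g) t).
Definition acc (g : curve) (t : R) : vec3 :=
  (Derive_n (cx g) 2 t, Derive_n (cy g) 2 t, Derive_n (cz g) 2 t).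

Definition smooth_curve (g : curve) : Prop :=
  forall (n : nat) (t : R),
    ex_derive_n (cx g) n t /\ ex_derive_n (cy g) n t /\ ex_derive_n (cz g) n t.

Definition regular_curve (g : curve) : Prop := forall t, vel g t <> (0, 0, 0).

Definition on_sphere (g : curve) : Prop := forall t, dot (pt g t) (pt g t) = 1.

Definition closed_curve (g : curve) : Prop :=
  exists T, 0 < T /\ forall t, pt g (t + T) = pt g t.

Definition avoids_N (g : curve) : Prop := forall t, pt g t <> Npole.

Definition nvec (g : curve) (t : R) : vec3 :=
  vscale (/ vnorm (vel g t)) (cross (vel g t) (pt g t)).
Definition kappa (g : curve) (t : R) : R :=
  dot (acc g t) (nvec g t) / (vnorm (vel g t) ^ 2).

(* alpha-stationary: kappa = alpha <n, xi> / d, at every point where xi is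
   defined (i.e. off the south pole; N is avoided by assumption). *)
Definition alpha_stationary (alpha : R) (g : curve) : Prop :=
  forall t, pt g t <> Spole ->
    kappa g t = alpha * dot (nvec g t) (xi (pt g t)) / dN (pt g t).

From Stdlib Require Import Reals Lra.
From Coquelicot Require Import Coquelicot.
Open Scope R_scope.

(* At a minimum of the height z along the closed curve the velocity v is
   horizontal, and the stationarity equation together with |gamma| = 1 gives
   z'' d = - |v|^2 (z d + alpha sin d), where d is the distance to N.  Since
   z'' >= 0 there, z d + alpha sin d <= 0, which forces alpha < 0 when z > 0.
   In the lower hemisphere the same identity at a maximum of z gives alpha > 0. *)

Lemma is_derive_const_fun_0 (F : R -> R) (c t l : R) :
  (forall s, F s = c) -> is_derive F t l -> l = 0.
Proof.
  intros HF Hl.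
  rewrite <- (is_derive_unique F t l Hl), (Derive_ext F (fun _ => c) t HF).
  apply Derive_const.
Qed.

Lemma is_derive_neg_left_gt (F : R -> R) (q L : R) :
  is_derive F q L -> L < 0 ->
  exists d, 0 < d /\ forall k, 0 < k < d -> F q < F (q - k).
Proof.
  intros HF HL.
  destruct (proj1 (is_derive_Reals F q L) HF (- L / 2) ltac:(lra)) as [d Hd].
  exists d; split; [apply cond_pos|]; intros k Hk.
  assert (Hq := Hd (- k) ltac:(lra) ltac:(rewrite Rabs_left; lra)).
  replace (q + - k) with (q - k) in Hq by ring.
  apply Rabs_def2 in Hq.
  assert (Hslope : (F (q - k) - F q) / - k < 0) by lra.
  assert (E : F (q - k) - F q = (F (q - k) - F q) / - k * - k) by (field; lra).
  nra.
Qed.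

Lemma local_min_Derive_0 (f : R -> R) (q r : R) :
  0 < r -> (forall t, q - r < t < q + r -> f q <= f t) -> ex_derive f q ->
  Derive f q = 0.
Proof.
  intros Hr Hmin Hd.
  assert (pr : derivable_pt f q).
  { exists (Derive f q). apply is_derive_Reals, Derive_correct, Hd. }
  rewrite <- (Derive_Reals f q pr).
  apply (deriv_minimum f (q - r) (q + r)); [lra | lra |].
  intros t Ht1 Ht2; apply Hmin; lra.
Qed.

Lemma local_min_Derive2_ge0 (f : R -> R) (q r : R) :
  0 < r -> (forall t, q - r < t < q + r -> f q <= f t) ->
  (forall t, ex_derive f t) -> ex_derive (Derive f) q -> Derive f q = 0 ->
  0 <= Derive (Derive f) q.
Proof.
  intros Hr Hmin Hd Hd2 Hf0.
  destruct (Rle_lt_dec 0 (Derive (Derive f) q)) as [|Hneg]; [assumption | exfalso].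
  destruct (is_derive_neg_left_gt (Derive f) q _ (Derive_correct _ _ Hd2) Hneg)
    as [d [Hd0 Hpos]].
  set (h := Rmin d r / 2).
  assert (Hh : 0 < h < d /\ h < r).
  { unfold h; pose proof (Rmin_l d r); pose proof (Rmin_r d r).
    pose proof (Rmin_glb_lt d r 0 Hd0 Hr). lra. }
  destruct (MVT_cor2 f (Derive f) (q - h) q ltac:(lra)
              (fun c _ => proj1 (is_derive_Reals _ _ _) (Derive_correct _ _ (Hd c))))
    as [c [Hmvt Hc]].
  assert (Hfc : 0 < Derive f c).
  { rewrite <- Hf0. replace c with (q - (q - c)) by ring. apply Hpos; lra. }
  assert (f q <= f (q - h)) by (apply Hmin; lra).
  nra.
Qed.

Lemma periodic_local_min (f : R -> R) (T : R) :
  0 < T -> (forall t, f (t + T) = f t) -> (forall t, continuity_pt f t) ->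
  exists q, forall t, q - T < t < q + T -> f q <= f t.
Proof.
  intros HT Hper Hc.
  destruct (continuity_ab_min f 0 T ltac:(lra) (fun c _ => Hc c)) as [m [Hm Hm0T]].
  exists m; intros t Ht.
  destruct (Rlt_le_dec t 0) as [Hneg|Hnn]; [|destruct (Rle_lt_dec t T) as [|HgtT]].
  - rewrite <- (Hper t); apply Hm; lra.
  - apply Hm; lra.
  - replace t with (t - T + T) by ring; rewrite Hper; apply Hm; lra.
Qed.

Lemma periodic_critical_min (f : R -> R) (T : R) :
  0 < T -> (forall t, f (t + T) = f t) ->
  (forall t, ex_derive f t) -> (forall t, ex_derive (Derive f) t) ->
  exists q, Derive f q = 0 /\ 0 <= Derive (Derive f) q.
Proof.
  intros HT Hper Hd Hd2.
  assert (Hc : forall t, continuity_pt f t).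
  { intro t; apply derivable_continuous_pt.
    exists (Derive f t); apply is_derive_Reals, Derive_correct, Hd. }
  destruct (periodic_local_min f T HT Hper Hc) as [q Hq].
  assert (Hf0 : Derive f q = 0) by exact (local_min_Derive_0 f q T HT Hq (Hd q)).
  exists q; split; [exact Hf0 | exact (local_min_Derive2_ge0 f q T HT Hq Hd (Hd2 q) Hf0)].
Qed.

Lemma periodic_critical_max (f : R -> R) (T : R) :
  0 < T -> (forall t, f (t + T) = f t) ->
  (forall t, ex_derive f t) -> (forall t, ex_derive (Derive f) t) ->
  exists q, Derive f q = 0 /\ Derive (Derive f) q <= 0.
Proof.
  intros HT Hper Hd Hd2.
  set (nf := fun t => - f t).
  assert (Hnf : forall t, Derive nf t = - Derive f t) by (intro t; apply Derive_opp).
  assert (Hnf2 : forall t, Derive (Derive nf) t = - Derive (Derive f) t).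
  { intro t; rewrite (Derive_ext _ _ t Hnf); apply Derive_opp. }
  destruct (periodic_critical_min nf T HT) as [q [Hq1 Hq2]].
  - intro t; unfold nf; rewrite Hper; reflexivity.
  - intro t; apply (ex_derive_opp f t (Hd t)).
  - intro t; apply (ex_derive_ext (fun s => - Derive f s)).
    + intro s; symmetry; apply Hnf.
    + apply (ex_derive_opp (Derive f) t (Hd2 t)).
  - exists q; rewrite Hnf in Hq1; rewrite Hnf2 in Hq2; split; lra.
Qed.

Lemma dot_vscale_l (k : R) (p q : vec3) : dot (vscale k p) q = k * dot p q.
Proof. unfold dot, vscale, vx, vy, vz; simpl; ring. Qed.

Lemma dot_vscale_r (k : R) (p q : vec3) : dot p (vscale k q) = k * dot p q.
Proof. unfold dot, vscale, vx, vy, vz; simpl; ring. Qed.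

Lemma dot_cross_r (v p : vec3) : dot (cross v p) p = 0.
Proof. unfold dot, cross, vx, vy, vz; simpl; ring. Qed.

Lemma dot_xi (p w : vec3) :
  dot w (xi p) = / sin (dN p) * (vz p * dot w p - vz w).
Proof. unfold xi, Npole, dot, vscale, vsub, vx, vy, vz; simpl; ring. Qed.

Lemma dot_self_pos (v : vec3) : v <> (0, 0, 0) -> 0 < dot v v.
Proof.
  destruct v as [[a b] c]; unfold dot, vx, vy, vz; simpl; intro Hv.
  destruct (Req_dec a 0), (Req_dec b 0), (Req_dec c 0); try nra.
  subst; contradiction.
Qed.

Lemma unit_vz_ge1 (p : vec3) : dot p p = 1 -> 1 <= vz p -> p = Npole.
Proof.
  destruct p as [[a b] c]; unfold dot, Npole, vx, vy, vz; simpl; intros Hp Hc.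
  assert (a = 0) by nra; assert (b = 0) by nra; assert (c = 1) by nra.
  subst; reflexivity.
Qed.

Lemma unit_vz_le_m1 (p : vec3) : dot p p = 1 -> vz p <= -1 -> p = Spole.
Proof.
  destruct p as [[a b] c]; unfold dot, Spole, vx, vy, vz; simpl; intros Hp Hc.
  assert (a = 0) by nra; assert (b = 0) by nra; assert (c = -1) by nra.
  subst; reflexivity.
Qed.

Lemma vz_frame_expansion (p v a : vec3) :
  dot p p = 1 -> dot p v = 0 -> vz v = 0 ->
  dot v v * vz a = dot v v * dot p a * vz p + dot a (cross v p) * vz (cross v p).
Proof.
  destruct p as [[p1 p2] p3], v as [[v1 v2] v3], a as [[a1 a2] a3].
  unfold dot, cross, vx, vy, vz; simpl; intros Hp Hpv Hv3; subst v3.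
  assert (E : (v1 * v1 + v2 * v2 + 0 * 0) * a3
    - ((v1 * v1 + v2 * v2 + 0 * 0) * (p1 * a1 + p2 * a2 + p3 * a3) * p3
       + (a1 * (v2 * p3 - 0 * p2) + a2 * (0 * p1 - v1 * p3) + a3 * (v1 * p2 - v2 * p1))
         * (v1 * p2 - v2 * p1))
    = - (v1 * v1 + v2 * v2) * a3 * (p1 * p1 + p2 * p2 + p3 * p3 - 1)
      + a3 * (p1 * v1 + p2 * v2 + p3 * 0) ^ 2
      - p3 * (a1 * v1 + a2 * v2) * (p1 * v1 + p2 * v2 + p3 * 0)) by ring.
  rewrite Hp, Hpv in E. lra.
Qed.

Lemma vz_cross_sqr (p v : vec3) :
  dot p p = 1 -> dot p v = 0 -> vz v = 0 ->
  vz (cross v p) ^ 2 = dot v v * (1 - vz p ^ 2).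
Proof.
  destruct p as [[p1 p2] p3], v as [[v1 v2] v3].
  unfold dot, cross, vx, vy, vz; simpl; intros Hp Hpv Hv3; subst v3.
  assert (E : (v1 * p2 - v2 * p1) ^ 2
    = (v1 * v1 + v2 * v2 + 0 * 0) * (p1 * p1 + p2 * p2 + p3 * p3 - p3 ^ 2)
      - (p1 * v1 + p2 * v2 + p3 * 0) ^ 2) by ring.
  rewrite Hp, Hpv in E. lra.
Qed.

Lemma dN_sin_pos (p : vec3) : -1 < vz p < 1 -> 0 < dN p /\ 0 < sin (dN p).
Proof.
  intro Hz; unfold dN.
  assert (Hc : cos (acos (vz p)) = vz p) by (apply cos_acos; lra).
  pose proof (acos_bound (vz p)) as Hb.
  assert (acos (vz p) <> 0) by (intro E; rewrite E, cos_0 in Hc; lra).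
  assert (acos (vz p) <> PI) by (intro E; rewrite E, cos_PI in Hc; lra).
  split; [lra | apply sin_gt_0; lra].
Qed.

Lemma sin_dN_sqr (p : vec3) : -1 <= vz p <= 1 -> sin (dN p) ^ 2 = 1 - vz p ^ 2.
Proof.
  intro Hz; unfold dN.
  rewrite <- (cos_acos (vz p)) at 2 by lra.
  pose proof (sin2_cos2 (acos (vz p))) as E; unfold Rsqr in E. lra.
Qed.

(* Expand a_z in the orthogonal frame (p, v, v x p): the sphere constraint
   gives the p-component of a, the curvature equation its (v x p)-component. *)
Lemma height_equation (alpha : R) (p v a : vec3) :
  dot p p = 1 -> dot p v = 0 -> dot v v + dot p a = 0 -> vz v = 0 ->
  v <> (0, 0, 0) -> -1 < vz p < 1 ->
  dot a (vscale (/ vnorm v) (cross v p)) / vnorm v ^ 2 =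
    alpha * dot (vscale (/ vnorm v) (cross v p)) (xi p) / dN p ->
  vz a * dN p = - dot v v * (vz p * dN p + alpha * sin (dN p)).
Proof.
  intros Hp Hpv Hacc Hv3 Hv0 Hz Hstat.
  rewrite dot_vscale_r, dot_vscale_l, dot_xi, dot_cross_r in Hstat.
  pose proof (dot_self_pos v Hv0) as HV.
  destruct (dN_sin_pos p Hz) as [Hd Hs].
  pose proof (sin_dN_sqr p ltac:(lra)) as Hs2.
  pose proof (vz_frame_expansion p v a Hp Hpv Hv3) as Hframe.
  pose proof (vz_cross_sqr p v Hp Hpv Hv3) as HC2.
  assert (Hr : 0 < vnorm v) by (apply sqrt_lt_R0; exact HV).
  assert (Hr2 : vnorm v ^ 2 = dot v v) by (unfold vnorm; rewrite pow2_sqrt; lra).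
  set (V := dot v v) in *; set (r := vnorm v) in *.
  set (A := dot a (cross v p)) in *; set (C := vz (cross v p)) in *.
  set (d := dN p) in *; set (s := sin d) in *; set (z := vz p) in *.
  assert (HA : A * d * s = - alpha * V * C).
  { rewrite <- Hr2.
    replace (A * d * s) with (r ^ 3 * d * s * (/ r * A / r ^ 2)) by (field; lra).
    rewrite Hstat; field; lra. }
  apply (Rmult_eq_reg_l (V * s)); [| nra].
  replace (V * s * (vz a * d)) with ((V * vz a) * d * s) by ring.
  rewrite Hframe.
  replace (dot p a) with (- V) by lra.
  replace ((V * - V * z + A * C) * d * s) with (- V * V * z * d * s + A * d * s * C) by ring.
  rewrite HA.
  replace (- V * V * z * d * s + - alpha * V * C * C)
    with (- V * V * z * d * s - alpha * V * C ^ 2) by ring.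
  rewrite HC2, <- Hs2; ring.
Qed.

Definition velc (g : curve) : curve :=
  mkCurve (Derive (cx g)) (Derive (cy g)) (Derive (cz g)).

Definition ex_derive_curve (g : curve) (t : R) : Prop :=
  ex_derive (cx g) t /\ ex_derive (cy g) t /\ ex_derive (cz g) t.

Lemma smooth_ex_derive_curve (g : curve) (t : R) :
  smooth_curve g -> ex_derive_curve g t /\ ex_derive_curve (velc g) t.
Proof.
  intro Hs; destruct (Hs 1%nat t) as [? [? ?]], (Hs 2%nat t) as [? [? ?]].
  repeat split; assumption.
Qed.

Lemma is_derive_dot_pt (g h : curve) (t : R) :
  ex_derive_curve g t -> ex_derive_curve h t ->
  is_derive (fun s => dot (pt g s) (pt h s)) t
    (dot (vel g t) (pt h t) + dot (pt g t) (vel h t)).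
Proof.
  intros [Hgx [Hgy Hgz]] [Hhx [Hhy Hhz]].
  unfold dot, pt, vel, vx, vy, vz; simpl.
  auto_derive; [repeat split; assumption |].
  (* auto_derive leaves eta-expanded [Derive (fun x => f x)], a separate atom for ring *)
  repeat match goal with
         | |- context [Derive (fun x => ?f x)] => change (fun x => f x) with f
         end.
  ring.
Qed.

Lemma on_sphere_dot_pt_vel (g : curve) (t : R) :
  smooth_curve g -> on_sphere g -> dot (pt g t) (vel g t) = 0.
Proof.
  intros Hs Ho.
  destruct (smooth_ex_derive_curve g t Hs) as [Hg _].
  pose proof (is_derive_const_fun_0 _ 1 t _ Ho (is_derive_dot_pt g g t Hg Hg)) as E.
  unfold dot in E |- *; lra.
Qed.

Lemma on_sphere_dot_vel_acc (g : curve) (t : R) :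
  smooth_curve g -> on_sphere g ->
  dot (vel g t) (vel g t) + dot (pt g t) (acc g t) = 0.
Proof.
  intros Hs Ho.
  destruct (smooth_ex_derive_curve g t Hs) as [Hg Hvg].
  exact (is_derive_const_fun_0 _ 0 t _
           (fun s => on_sphere_dot_pt_vel g s Hs Ho) (is_derive_dot_pt g (velc g) t Hg Hvg)).
Qed.

Lemma stationary_height_equation (alpha : R) (g : curve) (t : R) :
  smooth_curve g -> regular_curve g -> on_sphere g -> alpha_stationary alpha g ->
  Derive (cz g) t = 0 -> -1 < vz (pt g t) < 1 ->
  Derive (Derive (cz g)) t * dN (pt g t) =
    - dot (vel g t) (vel g t) * (vz (pt g t) * dN (pt g t) + alpha * sin (dN (pt g t))).
Proof.
  intros Hs Hr Ho Hst Hz' Hz.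
  apply (height_equation alpha (pt g t) (vel g t) (acc g t)).
  - apply Ho.
  - exact (on_sphere_dot_pt_vel g t Hs Ho).
  - exact (on_sphere_dot_vel_acc g t Hs Ho).
  - exact Hz'.
  - apply Hr.
  - exact Hz.
  - apply Hst; intro HS; rewrite HS in Hz; unfold Spole, vz in Hz; simpl in Hz; lra.
Qed.

Lemma stationary_upper_alpha_neg (alpha : R) (g : curve) :
  smooth_curve g -> regular_curve g -> on_sphere g -> closed_curve g ->
  avoids_N g -> alpha_stationary alpha g ->
  (forall t, 0 < vz (pt g t)) -> alpha < 0.
Proof.
  intros Hs Hr Ho [T [HT Hper]] HN Hst Hup.
  destruct (periodic_critical_min (cz g) T HT (fun t => f_equal vz (Hper t))
              (fun t => proj2 (proj2 (Hs 1%nat t))) (fun t => proj2 (proj2 (Hs 2%nat t))))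
    as [q [Hq1 Hq2]].
  assert (Hz1 : vz (pt g q) < 1).
  { destruct (Rlt_le_dec (vz (pt g q)) 1) as [|Hge]; [assumption|].
    destruct (HN q (unit_vz_ge1 _ (Ho q) Hge)). }
  pose proof (Hup q) as Hz0.
  pose proof (stationary_height_equation alpha g q Hs Hr Ho Hst Hq1 ltac:(lra)) as E.
  destruct (dN_sin_pos (pt g q) ltac:(lra)) as [Hd Hsn].
  pose proof (dot_self_pos (vel g q) (Hr q)) as HV.
  set (V := dot (vel g q) (vel g q)) in *; set (z := vz (pt g q)) in *.
  set (d := dN (pt g q)) in *; set (s := sin d) in *.
  destruct (Rlt_le_dec alpha 0) as [|Ha]; [assumption | exfalso].
  assert (Hpos : 0 < z * d + alpha * s).
  { pose proof (Rmult_lt_0_compat z d Hz0 Hd).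
    pose proof (Rmult_le_pos alpha s Ha (Rlt_le _ _ Hsn)). lra. }
  assert (0 <= Derive (Derive (cz g)) q * d) by (apply Rmult_le_pos; lra).
  pose proof (Rmult_lt_0_compat _ _ HV Hpos).
  lra.
Qed.

Lemma stationary_lower_alpha_pos (alpha : R) (g : curve) :
  smooth_curve g -> regular_curve g -> on_sphere g -> closed_curve g ->
  alpha_stationary alpha g ->
  (forall t, vz (pt g t) < 0) -> 0 < alpha.
Proof.
  intros Hs Hr Ho [T [HT Hper]] Hst Hdown.
  destruct (periodic_critical_max (cz g) T HT (fun t => f_equal vz (Hper t))
              (fun t => proj2 (proj2 (Hs 1%nat t))) (fun t => proj2 (proj2 (Hs 2%nat t))))
    as [q [Hq1 Hq2]].
  pose proof (dot_self_pos (vel g q) (Hr q)) as HV.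
  assert (Hzm1 : -1 < vz (pt g q)).
  { destruct (Rlt_le_dec (-1) (vz (pt g q))) as [|Hle]; [assumption|].
    pose proof (on_sphere_dot_vel_acc g q Hs Ho) as Hacc.
    rewrite (unit_vz_le_m1 _ (Ho q) Hle) in Hacc.
    assert (HSa : dot Spole (acc g q) = - vz (acc g q))
      by (unfold dot, Spole, vx, vy, vz; simpl; ring).
    change (vz (acc g q)) with (Derive (Derive (cz g)) q) in HSa.
    lra. }
  pose proof (Hdown q) as Hz0.
  pose proof (stationary_height_equation alpha g q Hs Hr Ho Hst Hq1 ltac:(lra)) as E.
  destruct (dN_sin_pos (pt g q) ltac:(lra)) as [Hd Hsn].
  set (V := dot (vel g q) (vel g q)) in *; set (z := vz (pt g q)) in *.
  set (d := dN (pt g q)) in *; set (s := sin d) in *.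
  destruct (Rlt_le_dec 0 alpha) as [|Ha]; [assumption | exfalso].
  assert (Hneg : 0 < - (z * d + alpha * s)).
  { pose proof (Rmult_lt_0_compat (- z) d ltac:(lra) Hd).
    pose proof (Rmult_le_pos (- alpha) s ltac:(lra) (Rlt_le _ _ Hsn)). lra. }
  assert (0 <= - Derive (Derive (cz g)) q * d) by (apply Rmult_le_pos; lra).
  pose proof (Rmult_lt_0_compat _ _ HV Hneg).
  lra.
Qed.

Theorem theorem3p4 (alpha : R) (g : curve) :
  alpha <> 0 ->
  smooth_curve g -> regular_curve g -> on_sphere g -> closed_curve g ->
  avoids_N g -> alpha_stationary alpha g ->
  ((forall t, 0 < vz (pt g t)) -> alpha < 0) /\
  ((forall t, vz (pt g t) < 0) -> 0 < alpha).
Proof.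
  intros _ Hs Hr Ho Hc HN Hst; split.
  - exact (stationary_upper_alpha_neg alpha g Hs Hr Ho Hc HN Hst).
  - exact (stationary_lower_alpha_pos alpha g Hs Hr Ho Hc Hst).
Qed.
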